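(* Let $(X,d,\mu)$, $Y$, $\Omega$, $\mathrm M_\Omega$ be as in the setting below, let $f:Y\to\mathbb R^{M_1}$ be $L_1$-bi-Lipschitz, and let $g:X\to\mathbb R^{M_1}$ be a $\sqrt{M_1}L_1$-Lipschitz map with $g|_Y=f$. Assume $M_1$ is sufficiently large relative to $C_1$, $A$ and $\delta$ (i.e. $M_1\ge M_0(C_1,A,\delta)$ for a suitable $M_0$). Let $Q,R\in\mathrm M_\Omega$ with $d_{\mathrm W}(Q,R)\ge16M_1L_1^2$, and let $p\in Q$, $q\in R$. Then: (1) if $\dfrac{\operatorname{dist}(Q,R)}{\max(\operatorname{diam}Q,\operatorname{diam}R)}\ge\dfrac{8M_1L_1^2}{1+4C_1A/\delta}$, then $|g(p)-g(q)|\ge c\,d(p,q)$; (2) if $\dfrac{\operatorname{dist}(Q,R)}{\max(\operatorname{diam}Q,\operatorname{diam}R)}\le\dfrac{8M_1L_1^2}{1+4C_1A/\delta}$, then $|\operatorname{dist}(p,Y)-\operatorname{dist}(q,Y)|\ge c\,d(p,q)$, where $c>0$ depends only on $L_1,M_1,C_1,A,\delta$.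
   Context: Setting: $(X,d)$ is an $A$-uniformly perfect complete metric space (for every $x$ and $0<r<\operatorname{diam}X$ there is $y$ with $A^{-1}r\le d(x,y)\le r$) with a doubling measure $\mu$ (balls have finite positive measure and $\mu(B(x,2r))\le D\mu(B(x,r))$); $Y\subset X$ is closed, $\Omega=X\setminus Y$. Christ cubes of $(\Omega,d,\mu|_\Omega)$ come with constants $\delta,a_0\in(0,1)$, $C_1<\infty$. A Christ–Whitney decomposition of $\Omega$ is a collection $\mathrm M_\Omega$ of such Christ cubes satisfying: (1) $\mu(\Omega\setminus\bigcup_{Q\in\mathrm M_\Omega}Q)=0$; (2) $\operatorname{diam}(Q)\le \operatorname{dist}(Q,Y)\le \frac{4C_1A}{\delta}\operatorname{diam}(Q)$ for each $Q\in\mathrm M_\Omega$; (3) distinct $Q,Q'\in\mathrm M_\Omega$ are disjoint; (4) for each $Q\in\mathrm M_\Omega$ there are $x\in\Omega$ and $k\in\mathbb Z$ with $B(x,a_0\delta^k)\subset Q\subset B(x,C_1\delta^k)$. Whitney distance: $d_{\mathrm W}(Q,R)=\dfrac{\operatorname{dist}(Q,R)}{\min(\operatorname{diam}Q,\operatorname{diam}R)}$. *)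

From Stdlib Require Import Reals Lra Lia ZArith Classical ClassicalEpsilon.
Open Scope R_scope.

(* ---------- suprema / infima of real sets (0 when undefined) ---------- *)
Definition Rsup (E : R -> Prop) : R :=
  match excluded_middle_informative (bound E /\ exists x, E x) with
  | left H => proj1_sig (completeness E (proj1 H) (proj2 H))
  | right _ => 0
  end.
Definition Rinf (E : R -> Prop) : R := - Rsup (fun x => E (- x)).

Definition is_metric {X : Type} (d : X -> X -> R) : Prop :=
  (forall x y, 0 <= d x y) /\
  (forall x y, d x y = 0 <-> x = y) /\
  (forall x y, d x y = d y x) /\
  (forall x y z, d x z <= d x y + d y z).

Definition complete_metric {X : Type} (d : X -> X -> R) : Prop :=
  is_metric d /\
  forall u : nat -> X,
    (forall eps, 0 < eps -> exists N, forall m n, (N <= m)%nat -> (N <= n)%nat ->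
        d (u m) (u n) < eps) ->
    exists x, forall eps, 0 < eps -> exists N, forall n, (N <= n)%nat -> d (u n) x < eps.

Definition ballX {X : Type} (d : X -> X -> R) (x : X) (r : R) : X -> Prop :=
  fun y => d x y < r.

Definition subsetS {X : Type} (S T : X -> Prop) : Prop := forall x, S x -> T x.

Definition closed_in {X : Type} (d : X -> X -> R) (Y : X -> Prop) : Prop :=
  forall x, (forall eps, 0 < eps -> exists y, Y y /\ d x y < eps) -> Y x.

Definition diamS {X : Type} (d : X -> X -> R) (S : X -> Prop) : R :=
  Rsup (fun r => exists x y, S x /\ S y /\ r = d x y).

Definition dist_set {X : Type} (d : X -> X -> R) (S T : X -> Prop) : R :=
  Rinf (fun r => exists x y, S x /\ T y /\ r = d x y).

Definition dist_pt {X : Type} (d : X -> X -> R) (p : X) (T : X -> Prop) : R :=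
  dist_set d (fun z => z = p) T.

Definition dW {X : Type} (d : X -> X -> R) (Q Rc : X -> Prop) : R :=
  dist_set d Q Rc / Rmin (diamS d Q) (diamS d Rc).

(* A-uniformly perfect: for every x and 0 < r < diamS X there is y with
   A^{-1} r <= d(x,y) <= r.  ("r < diamS X" is written as "some pair of
   points is at distance > r", which also covers diamS X = +infinity.) *)
Definition uniformly_perfect {X : Type} (d : X -> X -> R) (A : R) : Prop :=
  forall x r, 0 < r -> (exists a b, r < d a b) ->
    exists y, r / A <= d x y /\ d x y <= r.

Inductive ereal : Type := EFin (r : R) | EInf.

Definition ele (a b : ereal) : Prop :=
  match a, b with
  | _, EInf => True
  | EInf, EFin _ => False
  | EFin x, EFin y => x <= y
  end.

Definition set_empty {X : Type} : X -> Prop := fun _ => False.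

(* Countable subadditivity
   mu(U_n A_n) <= sum_n mu(A_n) is written as: every real bound of the
   partial sums bounds mu(U_n A_n) (trivial if the series diverges). *)
Fixpoint sumR (n : nat) (a : nat -> R) : R :=
  match n with O => 0 | S k => sumR k a + a k end.

Definition outer_measure {X : Type} (mu : (X -> Prop) -> ereal) : Prop :=
  mu set_empty = EFin 0 /\
  (forall S T, subsetS S T -> ele (mu S) (mu T)) /\
  (forall (An : nat -> X -> Prop) (a : nat -> R) (r : R),
     (forall i, mu (An i) = EFin (a i)) ->
     (forall n, sumR n a <= r) ->
     ele (mu (fun x => exists i, An i x)) (EFin r)).

Definition doubling_measure {X : Type} (d : X -> X -> R)
    (mu : (X -> Prop) -> ereal) (D : R) : Prop :=
  outer_measure mu /\
  (forall x r, 0 < r -> exists v, mu (ballX d x r) = EFin v /\ 0 < v) /\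
  (forall x r v w, 0 < r -> mu (ballX d x r) = EFin v ->
      mu (ballX d x (2 * r)) = EFin w -> w <= D * v).

(* Dc k Q : Q is a dyadic (Christ) cube of generation k in Omega.
   These are Christ's properties (M. Christ, Colloq. Math. 1990, Thm 11),
   with the metric space Omega (balls of Omega are balls of X intersected
   with Omega) and the measure mu restricted to Omega. *)
Definition ballO {X : Type} (d : X -> X -> R) (Om : X -> Prop) (x : X) (r : R)
  : X -> Prop := fun y => Om y /\ d x y < r.

Definition christ_system {X : Type} (d : X -> X -> R) (mu : (X -> Prop) -> ereal)
    (Om : X -> Prop) (delta a0 C1 : R) (Dc : Z -> (X -> Prop) -> Prop) : Prop :=
  0 < delta < 1 /\ 0 < a0 < 1 /\ 0 < C1 /\
  (forall k Q, Dc k Q -> subsetS Q Om /\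
      forall x, Q x -> exists r, 0 < r /\ subsetS (ballO d Om x r) Q) /\
  (forall k, mu (fun x => Om x /\ ~ exists Q, Dc k Q /\ Q x) = EFin 0) /\
  (forall k l Q Q', (k <= l)%Z -> Dc l Q -> Dc k Q' ->
      subsetS Q Q' \/ (forall x, Q x -> Q' x -> False)) /\
  (forall k l Q, (l < k)%Z -> Dc k Q ->
      exists Q', Dc l Q' /\ subsetS Q Q' /\
        forall Q'', Dc l Q'' -> subsetS Q Q'' -> Q'' = Q') /\
  (forall k Q, Dc k Q -> diamS d Q <= C1 * powerRZ delta k) /\
  (forall k Q, Dc k Q -> exists z, Om z /\ subsetS (ballO d Om z (a0 * powerRZ delta k)) Q) /\
  (exists eta C2, 0 < eta /\ 0 < C2 /\
     forall k Q t v, Dc k Q -> 0 < t -> mu Q = EFin v ->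
       ele (mu (fun x => Q x /\
                 forall eps, 0 < eps -> exists w, Om w /\ ~ Q w /\
                                          d x w < t * powerRZ delta k + eps))
           (EFin (C2 * Rpower t eta * v))).

Definition christ_whitney {X : Type} (d : X -> X -> R) (mu : (X -> Prop) -> ereal)
    (Y : X -> Prop) (delta a0 C1 A : R) (Dc : Z -> (X -> Prop) -> Prop)
    (M : (X -> Prop) -> Prop) : Prop :=
  let Om := fun x => ~ Y x in
  (forall Q, M Q -> exists k, Dc k Q) /\
  mu (fun x => Om x /\ ~ exists Q, M Q /\ Q x) = EFin 0 /\
  (forall Q, M Q -> diamS d Q <= dist_set d Q Y /\
       dist_set d Q Y <= (4 * C1 * A / delta) * diamS d Q) /\
  (forall Q Q', M Q -> M Q' -> Q <> Q' -> forall x, Q x -> Q' x -> False) /\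
  (forall Q, M Q -> exists x k, Om x /\
       subsetS (ballO d Om x (a0 * powerRZ delta k)) Q /\
       subsetS Q (ballO d Om x (C1 * powerRZ delta k))).

(* ---------- maps into R^M (vectors = nat -> R, first M coordinates) ---------- *)
Definition eucl (M : nat) (v w : nat -> R) : R :=
  sqrt (sumR M (fun i => (v i - w i) ^ 2)).

Definition bilipschitz_on {X : Type} (d : X -> X -> R) (M : nat) (L : R)
    (Y : X -> Prop) (f : X -> nat -> R) : Prop :=
  forall y z, Y y -> Y z ->
    d y z / L <= eucl M (f y) (f z) /\ eucl M (f y) (f z) <= L * d y z.

Definition lipschitz {X : Type} (d : X -> X -> R) (M : nat) (L : R)
    (g : X -> nat -> R) : Prop :=
  forall x y, eucl M (g x) (g y) <= L * d x y.

(* Only two features of the cubes matter: they are bounded, and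
   [diam S <= dist(S,Y) <= lam * diam S] with [lam = 4 C1 A / delta]
   ([whitney_cube]).  Consequently every point of [S] lies at distance
   between [diam S] and [(1 + lam) diam S] from [Y].

   (1) If [dist(Q,R)] is large compared with both diameters, [p] and [q] are
       close to [Y] relative to [d p q]; choosing nearby points of [Y], on
       which [g = f] is bi-Lipschitz, gives [|g p - g q| >= d p q / (2 L)]
       ([extension_lower_bound], [whitney_far_case]).  This is where [M] must
       be large: [sqrt M >= (1 + lam)^2].
   (2) Otherwise the Whitney-distance bound forces the smaller cube to be
       much smaller than the larger one, so the distances of [p] and [q] to
       [Y] differ by a fixed fraction of [d p q] ([whitney_near_case]). *)
From Stdlib Require Import Reals Lra Lia ZArith Classical ClassicalEpsilon.
Open Scope R_scope.

Lemma Rsup_ub (E : R -> Prop) (x : R) : bound E -> E x -> x <= Rsup E.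
Proof.
  intros Hb Hx. unfold Rsup.
  destruct (excluded_middle_informative _) as [H|H].
  - destruct (completeness E (proj1 H) (proj2 H)) as [m [Hub Hleast]]; simpl. now apply Hub.
  - exfalso; apply H; split; [exact Hb | exists x; exact Hx].
Qed.

Lemma Rsup_lub (E : R -> Prop) (b : R) :
  (exists x, E x) -> (forall x, E x -> x <= b) -> Rsup E <= b.
Proof.
  intros Hn Hb. unfold Rsup.
  destruct (excluded_middle_informative _) as [H|H].
  - destruct (completeness E (proj1 H) (proj2 H)) as [m [Hub Hleast]]; simpl. now apply Hleast.
  - exfalso; apply H; split; [exists b; exact Hb | exact Hn].
Qed.

Lemma Rsup_approx (E : R -> Prop) (eps : R) :
  bound E -> (exists x, E x) -> 0 < eps -> exists x, E x /\ Rsup E - eps < x.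
Proof.
  intros Hb Hn He. apply NNPP; intro Hc.
  assert (Rsup E <= Rsup E - eps); [|lra].
  apply Rsup_lub; auto. intros x Hx.
  apply Rnot_lt_le. intro Hl. apply Hc. exists x; auto.
Qed.

Lemma Rsup_empty (E : R -> Prop) : (forall x, ~ E x) -> Rsup E = 0.
Proof.
  intros H. unfold Rsup.
  destruct (excluded_middle_informative _) as [Hne|_]; [|reflexivity].
  exfalso. destruct Hne as [_ [x Hx]]. exact (H x Hx).
Qed.

Lemma Rinf_lb (E : R -> Prop) (b x : R) :
  (forall z, E z -> b <= z) -> E x -> Rinf E <= x.
Proof.
  intros Hb Hx. unfold Rinf.
  assert (- x <= Rsup (fun z => E (- z))); [|lra].
  apply Rsup_ub.
  - exists (- b). intros z Hz. specialize (Hb _ Hz). lra.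
  - rewrite Ropp_involutive. exact Hx.
Qed.

Lemma Rinf_glb (E : R -> Prop) (b : R) :
  (exists x, E x) -> (forall x, E x -> b <= x) -> b <= Rinf E.
Proof.
  intros [x Hx] Hb. unfold Rinf.
  assert (Rsup (fun z => E (- z)) <= - b); [|lra].
  apply Rsup_lub.
  - exists (- x). rewrite Ropp_involutive. exact Hx.
  - intros z Hz. specialize (Hb _ Hz). lra.
Qed.

Lemma Rinf_approx (E : R -> Prop) (b eps : R) :
  (forall z, E z -> b <= z) -> (exists x, E x) -> 0 < eps ->
  exists x, E x /\ x < Rinf E + eps.
Proof.
  intros Hb [x Hx] He. unfold Rinf.
  destruct (Rsup_approx (fun z => E (- z)) eps) as [z [Hz1 Hz2]]; auto.
  - exists (- b). intros z Hz. specialize (Hb _ Hz). lra.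
  - exists (- x). rewrite Ropp_involutive. exact Hx.
  - exists (- z). split; auto. lra.
Qed.

Section MetricSets.
Context {X : Type} (d : X -> X -> R) (Hd : is_metric d).

Let d_nonneg : forall x y, 0 <= d x y := proj1 Hd.
Let d_sym : forall x y, d x y = d y x := proj1 (proj2 (proj2 Hd)).
Let d_tri : forall x y z, d x z <= d x y + d y z := proj2 (proj2 (proj2 Hd)).

Definition bounded_set (S : X -> Prop) : Prop :=
  exists z rho, forall x, S x -> d z x < rho.

Lemma dist_set_le (S T : X -> Prop) (x y : X) : S x -> T y -> dist_set d S T <= d x y.
Proof.
  intros Hx Hy. apply (Rinf_lb _ 0).
  - intros r (a & b & _ & _ & ->). apply d_nonneg.
  - exists x, y; auto.
Qed.

Lemma dist_set_glb (S T : X -> Prop) (b : R) :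
  (exists x y, S x /\ T y) -> (forall x y, S x -> T y -> b <= d x y) ->
  b <= dist_set d S T.
Proof.
  intros (x & y & Hx & Hy) Hb. apply Rinf_glb.
  - exists (d x y), x, y; auto.
  - intros r (a & c & Ha & Hc & ->). auto.
Qed.

Lemma dist_set_approx (S T : X -> Prop) (eps : R) :
  (exists x y, S x /\ T y) -> 0 < eps ->
  exists x y, S x /\ T y /\ d x y < dist_set d S T + eps.
Proof.
  intros (x & y & Hx & Hy) He.
  destruct (Rinf_approx (fun r => exists x y, S x /\ T y /\ r = d x y) 0 eps)
    as [r [(a & b & Ha & Hb & ->) Hr]]; auto.
  - intros r (a & c & _ & _ & ->). apply d_nonneg.
  - exists (d x y), x, y; auto.
  - exists a, b; auto.
Qed.

Lemma dist_set_vacuous (S T : X -> Prop) :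
  ~ (exists x y, S x /\ T y) -> dist_set d S T = 0.
Proof.
  intros Hno. unfold dist_set, Rinf. rewrite Rsup_empty; [lra|].
  intros r (a & b & Ha & Hb & _). apply Hno. exists a, b; auto.
Qed.

(* [dist(S,T)] is symmetric, so the two cases of part (2) reduce to one. *)
Lemma dist_set_sym (S T : X -> Prop) : dist_set d S T = dist_set d T S.
Proof.
  destruct (classic (exists x y, S x /\ T y)) as [(x & y & Hx & Hy)|Hno].
  - apply Rle_antisym; apply dist_set_glb; try (exists x, y; auto; fail);
      try (exists y, x; auto; fail); intros a b Ha Hb; rewrite d_sym;
      apply dist_set_le; auto.
  - rewrite !dist_set_vacuous; auto.
    intros (y & x & Hy & Hx). apply Hno. exists x, y; auto.
Qed.

Lemma diam_le (S : X -> Prop) (x y : X) :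
  bounded_set S -> S x -> S y -> d x y <= diamS d S.
Proof.
  intros (z & rho & Hz) Hx Hy. apply Rsup_ub.
  - exists (2 * rho). intros r (a & b & Ha & Hb & ->).
    pose proof (d_tri a z b). pose proof (Hz a Ha). pose proof (Hz b Hb).
    rewrite (d_sym a z) in *. lra.
  - exists x, y; auto.
Qed.

Lemma diam_nonneg (S : X -> Prop) (x : X) : bounded_set S -> S x -> 0 <= diamS d S.
Proof.
  intros Hb Hx. apply Rle_trans with (d x x); [apply d_nonneg | apply diam_le; auto].
Qed.

Lemma dist_le_diam_dist_diam (S T : X -> Prop) (p q : X) :
  bounded_set S -> bounded_set T -> S p -> T q ->
  d p q <= diamS d S + dist_set d S T + diamS d T.
Proof.
  intros HS HT Hp Hq.
  apply le_epsilon. intros eps He.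
  destruct (dist_set_approx S T eps) as (x & y & Hx & Hy & Hxy); [exists p, q; auto | lra |].
  pose proof (d_tri p x q). pose proof (d_tri x y q).
  pose proof (diam_le S p x HS Hp Hx). pose proof (diam_le T y q HT Hy Hq). lra.
Qed.

Lemma dist_set_le_dist_pt (S T : X -> Prop) (x : X) :
  S x -> dist_set d S T <= dist_pt d x T.
Proof.
  intros Hx. destruct (classic (exists y, T y)) as [[y Hy]|Hno].
  - apply dist_set_glb; [exists x, y; auto|]. intros a b -> Hb. apply dist_set_le; auto.
  - unfold dist_pt. rewrite !dist_set_vacuous; try lra;
      intros (a & b & _ & Hb); apply Hno; exists b; auto.
Qed.

Lemma dist_pt_le_diam_dist (S T : X -> Prop) (x : X) :
  bounded_set S -> S x -> (exists y, T y) ->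
  dist_pt d x T <= diamS d S + dist_set d S T.
Proof.
  intros HS Hx [y Hy].
  assert (dist_pt d x T - diamS d S <= dist_set d S T); [|lra].
  apply dist_set_glb; [exists x, y; auto|].
  intros z w Hz Hw.
  pose proof (dist_set_le (fun a => a = x) T x w eq_refl Hw).
  pose proof (d_tri x z w). pose proof (diam_le S x z HS Hx Hz).
  unfold dist_pt. lra.
Qed.

Lemma dist_pt_approx (T : X -> Prop) (x : X) (eps : R) :
  (exists y, T y) -> 0 < eps -> exists y, T y /\ d x y < dist_pt d x T + eps.
Proof.
  intros [y Hy] He.
  destruct (dist_set_approx (fun a => a = x) T eps) as (z & w & -> & Hw & Hzw);
    [exists x, y; auto | auto |].
  exists w; auto.
Qed.

End MetricSets.

Lemma sumR_ext (n : nat) (a b : nat -> R) :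
  (forall i, (i < n)%nat -> a i = b i) -> sumR n a = sumR n b.
Proof.
  induction n as [|n IH]; simpl; intros H; auto.
  rewrite IH by (intros; apply H; lia). rewrite (H n) by lia. reflexivity.
Qed.

Lemma sumR_sq_nonneg (n : nat) (a : nat -> R) : 0 <= sumR n (fun i => a i ^ 2).
Proof.
  induction n as [|n IH]; cbn [sumR]; [lra|]. pose proof (pow2_ge_0 (a n)). lra.
Qed.

(* Minkowski's inequality in the plane, the inductive step below. *)
Lemma minkowski_plane (u v x y : R) :
  sqrt ((u + v) ^ 2 + (x + y) ^ 2) <= sqrt (u ^ 2 + x ^ 2) + sqrt (v ^ 2 + y ^ 2).
Proof.
  set (P := sqrt (u ^ 2 + x ^ 2)). set (Q := sqrt (v ^ 2 + y ^ 2)).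
  assert (HP : 0 <= P) by apply sqrt_pos. assert (HQ : 0 <= Q) by apply sqrt_pos.
  assert (HP2 : P * P = u ^ 2 + x ^ 2) by (apply sqrt_sqrt; nra).
  assert (HQ2 : Q * Q = v ^ 2 + y ^ 2) by (apply sqrt_sqrt; nra).
  assert (Hcs : u * v + x * y <= P * Q).
  { assert (Hsq : (u * v + x * y) ^ 2 <= (P * Q) ^ 2).
    { replace ((P * Q) ^ 2) with ((P * P) * (Q * Q)) by ring. rewrite HP2, HQ2.
      pose proof (pow2_ge_0 (u * y - v * x)). nra. }
    assert (0 <= P * Q) by nra. nra. }
  rewrite <- (sqrt_square (P + Q)) by lra.
  apply sqrt_le_1_alt. nra.
Qed.

Lemma minkowski (n : nat) (a b : nat -> R) :
  sqrt (sumR n (fun i => (a i + b i) ^ 2)) <=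
  sqrt (sumR n (fun i => a i ^ 2)) + sqrt (sumR n (fun i => b i ^ 2)).
Proof.
  induction n as [|n IH]; cbn [sumR].
  - rewrite sqrt_0. lra.
  - set (SA := sumR n (fun i => a i ^ 2)) in *.
    set (SB := sumR n (fun i => b i ^ 2)) in *.
    set (SC := sumR n (fun i => (a i + b i) ^ 2)) in *.
    assert (HA : 0 <= SA) by apply sumR_sq_nonneg.
    assert (HB : 0 <= SB) by apply sumR_sq_nonneg.
    assert (HC : 0 <= SC) by apply (sumR_sq_nonneg n (fun i => a i + b i)).
    pose proof (minkowski_plane (sqrt SA) (sqrt SB) (a n) (b n)) as Hplane.
    rewrite !pow2_sqrt in Hplane by auto.
    eapply Rle_trans; [|exact Hplane].
    apply sqrt_le_1_alt.
    assert (SC <= (sqrt SA + sqrt SB) ^ 2); [|lra].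
    rewrite <- (pow2_sqrt SC) by auto. pose proof (sqrt_pos SC).
    apply pow_incr; lra.
Qed.

Lemma eucl_triangle (M : nat) (u v w : nat -> R) : eucl M u w <= eucl M u v + eucl M v w.
Proof.
  unfold eucl.
  rewrite (sumR_ext M (fun i => (u i - w i) ^ 2)
                      (fun i => ((u i - v i) + (v i - w i)) ^ 2))
    by (intros; f_equal; ring).
  apply (minkowski M (fun i => u i - v i) (fun i => v i - w i)).
Qed.

Lemma eucl_sym (M : nat) (u v : nat -> R) : eucl M u v = eucl M v u.
Proof. unfold eucl. f_equal. apply sumR_ext. intros. ring. Qed.

Lemma extension_lower_bound {X : Type} (d : X -> X -> R) (M : nat) (L Lg : R)
    (Y : X -> Prop) (f g : X -> nat -> R) (p q : X) :
  is_metric d -> 0 < L -> 0 <= Lg ->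
  bilipschitz_on d M L Y f -> lipschitz d M Lg g ->
  (forall y, Y y -> forall i, (i < M)%nat -> g y i = f y i) -> (exists y, Y y) ->
  d p q - (1 + L * Lg) * (dist_pt d p Y + dist_pt d q Y) <= L * eucl M (g p) (g q).
Proof.
  intros Hd HL HLg Hf Hg Hgf HY.
  pose proof Hd as (_ & _ & d_sym & d_tri).
  set (k := 1 + L * Lg).
  assert (Hk : 0 < k) by (unfold k; nra).
  apply le_epsilon. intros eps He.
  set (e := eps / (2 * k)).
  assert (He_pos : 0 < e) by (unfold e; apply Rdiv_lt_0_compat; lra).
  assert (Hke : k * (2 * e) = eps) by (unfold e; field; lra).
  destruct (dist_pt_approx d Hd Y p e HY He_pos) as (yp & Hyp & Hdp).
  destruct (dist_pt_approx d Hd Y q e HY He_pos) as (yq & Hyq & Hdq).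
  set (E := eucl M (g p) (g q)).
  assert (Hyy : d yp yq <= L * eucl M (g yp) (g yq)).
  { replace (eucl M (g yp) (g yq)) with (eucl M (f yp) (f yq))
      by (unfold eucl; f_equal; apply sumR_ext; intros i Hi; rewrite !Hgf; auto).
    destruct (Hf yp yq Hyp Hyq) as [Hlow _].
    apply (Rmult_le_compat_l L) in Hlow; [|lra].
    replace (L * (d yp yq / L)) with (d yp yq) in Hlow by (field; lra). exact Hlow. }
  assert (Hgyy : eucl M (g yp) (g yq) <= Lg * d p yp + E + Lg * d q yq).
  { pose proof (eucl_triangle M (g yp) (g p) (g yq)).
    pose proof (eucl_triangle M (g p) (g q) (g yq)).
    rewrite (eucl_sym M (g yp) (g p)) in *.
    pose proof (Hg p yp). pose proof (Hg q yq). unfold E. lra. }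
  assert (Hpq : d p q <= d p yp + d yp yq + d q yq).
  { pose proof (d_tri p yp q). pose proof (d_tri yp yq q). rewrite (d_sym yq q) in *. lra. }
  assert (Hdetour : d p q <= L * E + k * (d p yp + d q yq)).
  { assert (L * eucl M (g yp) (g yq) <= L * (Lg * d p yp + E + Lg * d q yq))
      by (apply Rmult_le_compat_l; lra).
    unfold k. lra. }
  assert (k * (d p yp + d q yq) <= k * (dist_pt d p Y + dist_pt d q Y + 2 * e))
    by (apply Rmult_le_compat_l; lra).
  lra.
Qed.

Lemma mul_le_of_le_div (a b c : R) : 0 < b -> a <= c / b -> a * b <= c.
Proof.
  intros Hb H. apply (Rmult_le_compat_r b) in H; [|lra].
  replace (c / b * b) with c in H by (field; lra). exact H.
Qed.

Lemma div_le_of_le_mul (a b c : R) : 0 < b -> a <= c * b -> a / b <= c.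
Proof.
  intros Hb H. apply (Rmult_le_reg_r b); [exact Hb|].
  replace (a / b * b) with a by (field; lra). exact H.
Qed.

(* Arithmetic core of the "comparable distance" case: a lower bound on the
   Whitney distance [D / a] and an upper bound on [D / b] force the smaller
   size [a] to be much smaller than the larger one [b]. *)
Lemma small_cube_ratio (kappa s a b D : R) :
  0 < kappa -> 0 < s -> 0 <= a -> a <= b ->
  2 * kappa <= D / a -> D / b <= kappa / s ->
  2 * s * a <= b /\ D <= kappa / s * b.
Proof.
  intros Hk Hs Ha Hab Hlow Hup.
  assert (Ha_pos : 0 < a).
  { destruct (Req_dec a 0) as [Ha0|]; [|lra].
    rewrite Ha0, Rdiv_0_r in Hlow. lra. }
  assert (HD_low : 2 * kappa * a <= D) by (apply mul_le_of_le_div; lra).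
  assert (HD_up : D <= kappa / s * b).
  { replace D with (D / b * b) by (field; lra). apply Rmult_le_compat_r; lra. }
  split; [|exact HD_up].
  apply (Rmult_le_reg_l kappa); [exact Hk|].
  replace (kappa * b) with (s * (kappa / s * b)) by (field; lra).
  assert (s * (2 * kappa * a) <= s * (kappa / s * b)) by (apply Rmult_le_compat_l; lra).
  lra.
Qed.

Section WhitneyCubes.
Context {X : Type} (d : X -> X -> R) (Hd : is_metric d) (Y : X -> Prop) (lam : R).
Hypothesis lam_nonneg : 0 <= lam.

Definition whitney_cube (S : X -> Prop) : Prop :=
  bounded_set d S /\ diamS d S <= dist_set d S Y <= lam * diamS d S.

Lemma whitney_Y_nonempty (S : X -> Prop) :
  whitney_cube S -> 0 < diamS d S -> exists y, Y y.
Proof.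
  intros (_ & Hdist & _) Hpos. apply NNPP. intro Hno.
  rewrite dist_set_vacuous in Hdist by (intros (x & y & _ & Hy); apply Hno; exists y; auto).
  lra.
Qed.

Lemma whitney_dist_pt_lower (S : X -> Prop) (x : X) :
  whitney_cube S -> S x -> diamS d S <= dist_pt d x Y.
Proof.
  intros (_ & Hdist & _) Hx.
  eapply Rle_trans; [exact Hdist | apply dist_set_le_dist_pt; auto].
Qed.

Lemma whitney_dist_pt_upper (S : X -> Prop) (x : X) :
  whitney_cube S -> S x -> dist_pt d x Y <= (1 + lam) * diamS d S.
Proof.
  intros (Hb & Hlow & Hup) Hx.
  destruct (classic (exists y, Y y)) as [HY|HY].
  - pose proof (dist_pt_le_diam_dist d Hd S Y x Hb Hx HY). lra.
  - (* without [Y] both the cube and the distance degenerate to 0 *)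
    assert (Hvac : forall T : X -> Prop, ~ (exists a b, T a /\ Y b)).
    { intros T (a & b & _ & Hb'). apply HY. exists b; auto. }
    unfold dist_pt. rewrite dist_set_vacuous in * by apply Hvac.
    pose proof (diam_nonneg d Hd S x Hb Hx). nra.
Qed.

(* Case (1): cubes far apart relative to their sizes.  Both points are close
   to [Y] compared with [d p q], so [extension_lower_bound] applies. *)
Lemma whitney_far_case (M : nat) (L Lg kappa : R) (f g : X -> nat -> R)
    (Q Q' : X -> Prop) (p q : X) :
  0 < L -> 0 <= Lg -> 4 * (1 + lam) ^ 2 * (1 + L * Lg) <= kappa ->
  whitney_cube Q -> whitney_cube Q' -> Q p -> Q' q ->
  bilipschitz_on d M L Y f -> lipschitz d M Lg g ->
  (forall y, Y y -> forall i, (i < M)%nat -> g y i = f y i) ->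
  dist_set d Q Q' / Rmax (diamS d Q) (diamS d Q') >= kappa / (1 + lam) ->
  d p q / (2 * L) <= eucl M (g p) (g q).
Proof.
  intros HL HLg Hkappa WQ WQ' Hp Hq Hf Hg Hgf Hratio.
  set (s := 1 + lam) in *. set (k := 1 + L * Lg) in *.
  set (h := Rmax (diamS d Q) (diamS d Q')).
  assert (Hs : 1 <= s) by (unfold s; lra).
  assert (Hk : 1 <= k) by (unfold k; nra).
  assert (Hkappa_pos : 0 < kappa) by nra.
  assert (HhQ : diamS d Q <= h) by apply Rmax_l.
  assert (HhQ' : diamS d Q' <= h) by apply Rmax_r.
  pose proof (diam_nonneg d Hd Q p (proj1 WQ) Hp) as HdQ.
  assert (Hh : 0 < h).
  { destruct (Req_dec h 0) as [H0|]; [|lra].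
    fold h in Hratio. rewrite H0, Rdiv_0_r in Hratio.
    assert (0 < kappa / s) by (apply Rdiv_lt_0_compat; lra). lra. }
  assert (HY : exists y, Y y).
  { unfold h, Rmax in Hh. destruct (Rle_dec (diamS d Q) (diamS d Q')).
    - apply (whitney_Y_nonempty Q'); auto.
    - apply (whitney_Y_nonempty Q); auto. }
  assert (Hp_near : dist_pt d p Y <= s * h).
  { eapply Rle_trans; [exact (whitney_dist_pt_upper Q p WQ Hp)|].
    apply Rmult_le_compat_l; lra. }
  assert (Hq_near : dist_pt d q Y <= s * h).
  { eapply Rle_trans; [exact (whitney_dist_pt_upper Q' q WQ' Hq)|].
    apply Rmult_le_compat_l; lra. }
  assert (Hkh : kappa * h <= s * dist_set d Q Q').
  { apply Rge_le in Hratio. fold h in Hratio.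
    pose proof (mul_le_of_le_div _ _ _ Hh Hratio).
    replace (kappa * h) with (s * (kappa / s * h)) by (field; lra). nra. }
  pose proof (dist_set_le d Hd Q Q' p q Hp Hq) as Hpq.
  assert (Hsep : 4 * s * k * h <= d p q).
  { apply (Rmult_le_reg_l s); [lra|].
    assert (4 * s ^ 2 * k * h <= kappa * h) by (apply Rmult_le_compat_r; lra).
    nra. }
  pose proof (extension_lower_bound d M L Lg Y f g p q Hd HL HLg Hf Hg Hgf HY) as Hext.
  fold k in Hext.
  assert (k * (dist_pt d p Y + dist_pt d q Y) <= k * (2 * s * h))
    by (apply Rmult_le_compat_l; lra).
  apply div_le_of_le_mul; [lra|]. nra.
Qed.

(* Core of case (2): when [Q] is much smaller than [Q'] and not too far from
   it, [p] is much closer to [Y] than [q]. *)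
Lemma whitney_gap (K : R) (Q Q' : X -> Prop) (p q : X) :
  0 <= K -> whitney_cube Q -> whitney_cube Q' -> Q p -> Q' q ->
  2 * (1 + lam) * diamS d Q <= diamS d Q' -> dist_set d Q Q' <= K * diamS d Q' ->
  d p q / (2 * (2 + K)) <= Rabs (dist_pt d p Y - dist_pt d q Y).
Proof.
  intros HK WQ WQ' Hp Hq Hsmall Hclose.
  pose proof (diam_nonneg d Hd Q p (proj1 WQ) Hp) as HdQ.
  pose proof (whitney_dist_pt_upper Q p WQ Hp) as Hp_near.
  pose proof (whitney_dist_pt_lower Q' q WQ' Hq) as Hq_far.
  pose proof (dist_le_diam_dist_diam d Hd Q Q' p q (proj1 WQ) (proj1 WQ') Hp Hq) as Hpq.
  rewrite Rabs_minus_sym.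
  eapply Rle_trans; [|apply Rle_abs].
  apply (Rle_trans _ (diamS d Q' / 2)); [|nra].
  apply div_le_of_le_mul; nra.
Qed.

Lemma whitney_near_case (kappa : R) (Q Q' : X -> Prop) (p q : X) :
  0 < kappa -> whitney_cube Q -> whitney_cube Q' -> Q p -> Q' q ->
  2 * kappa <= dW d Q Q' ->
  dist_set d Q Q' / Rmax (diamS d Q) (diamS d Q') <= kappa / (1 + lam) ->
  d p q / (2 * (2 + kappa / (1 + lam))) <= Rabs (dist_pt d p Y - dist_pt d q Y).
Proof.
  intros Hk WQ WQ' Hp Hq HdW Hratio. unfold dW in HdW.
  assert (HK : 0 <= kappa / (1 + lam)) by (apply Rlt_le, Rdiv_lt_0_compat; lra).
  pose proof (diam_nonneg d Hd Q p (proj1 WQ) Hp) as HdQ.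
  pose proof (diam_nonneg d Hd Q' q (proj1 WQ') Hq) as HdQ'.
  destruct (Rle_dec (diamS d Q) (diamS d Q')) as [Hle|Hgt].
  - rewrite Rmin_left in HdW by exact Hle. rewrite Rmax_right in Hratio by exact Hle.
    destruct (small_cube_ratio kappa (1 + lam) _ _ _ Hk ltac:(lra) HdQ Hle HdW Hratio).
    apply (whitney_gap _ Q Q'); auto.
  - apply Rnot_le_lt in Hgt.
    rewrite Rmin_right in HdW by lra. rewrite Rmax_left in Hratio by lra.
    rewrite dist_set_sym in HdW, Hratio by exact Hd.
    destruct (small_cube_ratio kappa (1 + lam) (diamS d Q') (diamS d Q) (dist_set d Q' Q)
                Hk ltac:(lra) HdQ' ltac:(lra) HdW Hratio).
    rewrite Rabs_minus_sym, (proj1 (proj2 (proj2 Hd)) p q).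
    apply (whitney_gap _ Q' Q); auto.
Qed.

End WhitneyCubes.

(* The cubes of a Christ--Whitney decomposition are Whitney cubes with
   constant [4 C1 A / delta]: property (4) makes them bounded and
   property (2) is the comparability of diameter and distance to [Y]. *)
Lemma christ_whitney_cube {X : Type} (d : X -> X -> R) (mu : (X -> Prop) -> ereal)
    (Y : X -> Prop) (delta a0 C1 A : R) (Dc : Z -> (X -> Prop) -> Prop)
    (MW : (X -> Prop) -> Prop) (Q : X -> Prop) :
  christ_whitney d mu Y delta a0 C1 A Dc MW -> MW Q ->
  whitney_cube d Y (4 * C1 * A / delta) Q.
Proof.
  intros (_ & _ & Hdist & _ & Hball) HQ. split; [|apply Hdist; exact HQ].
  destruct (Hball Q HQ) as (x & k & _ & _ & Hsub).
  exists x, (C1 * powerRZ delta k). intros y Hy. apply (Hsub y Hy).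
Qed.

Lemma exists_nat_above (x : R) : exists N : nat, forall n, (N <= n)%nat -> x <= INR n.
Proof.
  destruct (INR_unbounded x) as [N HN]. exists N.
  intros n Hn. apply le_INR in Hn. lra.
Qed.

(* Choice of [M0]: once [sqrt M1 >= s ^ 2], the separation constant
   [kappa = 8 M1 L ^ 2] dominates what [whitney_far_case] requires for the
   Lipschitz constant [sqrt M1 * L]. *)
Lemma far_case_constant (s m L : R) :
  1 <= s -> s ^ 4 <= m -> 1 <= L ->
  4 * s ^ 2 * (1 + L * (sqrt m * L)) <= 8 * m * L ^ 2.
Proof.
  intros Hs Hm HL.
  assert (Hs4 : 1 <= s ^ 4) by (pose proof (pow_R1_Rle s 4 Hs); lra).
  set (r := sqrt m).
  assert (Hr2 : r * r = m) by (apply sqrt_sqrt; lra).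
  assert (Hsr : s ^ 2 <= r).
  { unfold r. rewrite <- (sqrt_pow2 (s ^ 2)) by (apply pow_le; lra).
    apply sqrt_le_1_alt. replace ((s ^ 2) ^ 2) with (s ^ 4) by ring. exact Hm. }
  assert (Hs2 : 1 <= s ^ 2) by (pose proof (pow_R1_Rle s 2 Hs); lra).
  assert (HL2 : 1 <= L ^ 2) by (pose proof (pow_R1_Rle L 2 HL); lra).
  assert (Hone : 1 + L * (r * L) <= 2 * r * L ^ 2) by nra.
  assert (4 * s ^ 2 * (1 + L * (r * L)) <= 4 * r * (2 * r * L ^ 2)).
  { apply Rmult_le_compat; nra. }
  nra.
Qed.

Theorem lemma3p4 :
  forall (C1 A delta : R), 0 < delta < 1 -> 0 < C1 -> 0 < A ->
  exists M0 : nat, forall M1 : nat, (M0 <= M1)%nat ->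
  forall L1 : R, 1 <= L1 ->
  exists c : R, 0 < c /\
  forall (X : Type) (d : X -> X -> R) (mu : (X -> Prop) -> ereal) (D a0 : R)
    (Y : X -> Prop) (Dc : Z -> (X -> Prop) -> Prop) (MW : (X -> Prop) -> Prop)
    (f g : X -> nat -> R) (Q Rc : X -> Prop) (p q : X),
    complete_metric d ->
    uniformly_perfect d A ->
    doubling_measure d mu D ->
    closed_in d Y ->
    christ_system d mu (fun x => ~ Y x) delta a0 C1 Dc ->
    christ_whitney d mu Y delta a0 C1 A Dc MW ->
    bilipschitz_on d M1 L1 Y f ->
    lipschitz d M1 (sqrt (INR M1) * L1) g ->
    (forall y, Y y -> forall i, (i < M1)%nat -> g y i = f y i) ->
    MW Q -> MW Rc ->
    16 * INR M1 * L1 ^ 2 <= dW d Q Rc ->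
    Q p -> Rc q ->
    (dist_set d Q Rc / Rmax (diamS d Q) (diamS d Rc)
       >= 8 * INR M1 * L1 ^ 2 / (1 + 4 * C1 * A / delta) ->
     eucl M1 (g p) (g q) >= c * d p q) /\
    (dist_set d Q Rc / Rmax (diamS d Q) (diamS d Rc)
       <= 8 * INR M1 * L1 ^ 2 / (1 + 4 * C1 * A / delta) ->
     Rabs (dist_pt d p Y - dist_pt d q Y) >= c * d p q).
Proof.
  intros C1 A delta Hdelta HC1 HA.
  set (lam := 4 * C1 * A / delta).
  assert (Hlam : 0 <= lam) by (unfold lam; apply Rlt_le, Rdiv_lt_0_compat; nra).
  destruct (exists_nat_above ((1 + lam) ^ 4)) as [M0 HM0].
  exists M0. intros M1 HM1 L1 HL1.
  set (kappa := 8 * INR M1 * L1 ^ 2).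
  assert (Hm : 1 <= INR M1).
  { pose proof (pow_R1_Rle (1 + lam) 4 ltac:(lra)). pose proof (HM0 M1 HM1). lra. }
  assert (Hkappa : 4 * (1 + lam) ^ 2 * (1 + L1 * (sqrt (INR M1) * L1)) <= kappa)
    by (apply far_case_constant; auto; lra).
  assert (Hkappa_pos : 0 < kappa) by (unfold kappa; nra).
  set (c1 := 1 / (2 * L1)). set (c2 := 1 / (2 * (2 + kappa / (1 + lam)))).
  assert (Hc2 : 0 < c2).
  { unfold c2. apply Rdiv_lt_0_compat; [lra|].
    assert (0 < kappa / (1 + lam)) by (apply Rdiv_lt_0_compat; lra). lra. }
  exists (Rmin c1 c2). split; [apply Rmin_glb_lt; unfold c1; [apply Rdiv_lt_0_compat|]; lra|].
  intros X d mu D a0 Y Dc MW f g Q Rc p q Hcm _ _ _ _ Hcw Hf Hg Hgf HQ HR HdW Hp Hq.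
  destruct Hcm as [Hd _].
  pose proof (christ_whitney_cube d mu Y delta a0 C1 A Dc MW Q Hcw HQ) as WQ.
  pose proof (christ_whitney_cube d mu Y delta a0 C1 A Dc MW Rc Hcw HR) as WR.
  assert (Hpq : 0 <= d p q) by apply (proj1 Hd).
  split; intro Hratio; apply Rle_ge.
  - eapply Rle_trans;
      [|exact (whitney_far_case d Hd Y lam Hlam M1 L1 (sqrt (INR M1) * L1) kappa f g
                 Q Rc p q ltac:(lra) ltac:(pose proof (sqrt_pos (INR M1)); nra) Hkappa
                 WQ WR Hp Hq Hf Hg Hgf Hratio)].
    replace (d p q / (2 * L1)) with (c1 * d p q) by (unfold c1; field; lra).
    apply Rmult_le_compat_r; [exact Hpq | apply Rmin_l].
  - eapply Rle_trans;
      [|exact (whitney_near_case d Hd Y lam Hlam kappa Q Rc p q Hkappa_pos WQ WR Hp Hq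
                 ltac:(unfold kappa; lra) Hratio)].
    replace (d p q / (2 * (2 + kappa / (1 + lam)))) with (c2 * d p q)
      by (unfold c2; field; split; lra).
    apply Rmult_le_compat_r; [exact Hpq | apply Rmin_r].
Qed.
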